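(* Let $0<\delta\le\rho\le r\le1$ and let $L,\tilde L\subset\mathcal{L}_{SL_2}$ be finite. (i) Suppose $\tilde L$ is $\rho$-separated and contained in a ball of radius $r$. Then there is $\tilde L'\subset\tilde L$ with $\#\tilde L'\gtrsim(\rho/r)\#\tilde L$ such that $\#(\tilde L'\cap B)\le(s/\rho)^2$ for every $s\in[\rho,1]$ and every ball $B\subset\mathbb{R}^4$ of radius $s$. (ii) Suppose $\#(L\cap B)\le(s/\delta)^2$ for every $s\in[\delta,1]$ and every ball $B\subset\mathbb{R}^4$ of radius $s$, and $L\subset\bigcup_{\tilde\ell\in\tilde L}B(\tilde\ell,\rho)$. Then for every $\varepsilon>0$ there exist $c=c(\varepsilon)>0$ and $\tilde L'\subset\tilde L$ with $\#\tilde L'\gtrsim c\,\delta^{\varepsilon}(\delta/\rho)^2\#L$ such that $\#(\tilde L'\cap B)\le(s/\rho)^2$ for every $s\in[\rho,1]$ and every ball $B\subset\mathbb{R}^4$ of radius $s$.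
   Context: For $(a,b,c,d)\in\mathbb{R}^4$ with $ad-bc=1$, $\ell_{(a,b,c,d)}=\{(a,b,0)+s(c,d,1):s\in\mathbb{R}\}$; $\mathcal{L}_{SL_2}$ is the set of such lines, each identified with its parameter in $\mathbb{R}^4$; separation, balls and distances are taken in parameter space with the Euclidean metric. A number $R\ge1$ is fixed and only lines with parameter in $B(0,R)\subset\mathbb{R}^4$ are considered; $X\lesssim Y$ means $X\le CY$ with $C$ depending only on $R$. *)

From Stdlib Require Import Reals List.
Import ListNotations.
Open Scope R_scope.

(* Parameter space R^4; a point (a,b,c,d) parametrizes the line
   {(a,b,0) + s(c,d,1)}. *)
Definition pt : Type := (R * R * R * R)%type.

Definition dist4 (p q : pt) : R :=
  let '(a1, b1, c1, d1) := p in
  let '(a2, b2, c2, d2) := q in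
  sqrt ((a1 - a2)^2 + (b1 - b2)^2 + (c1 - c2)^2 + (d1 - d2)^2).

Definition origin : pt := (0, 0, 0, 0).

Definition in_ball (x : pt) (s : R) (p : pt) : Prop := dist4 p x < s.

Definition in_ballb (x : pt) (s : R) (p : pt) : bool :=
  if Rlt_dec (dist4 p x) s then true else false.

(* Parameter of a line in L_{SL_2} lying in B(0,R0). *)
Definition admissible (R0 : R) (p : pt) : Prop :=
  (let '(a, b, c, d) := p in a * d - b * c = 1) /\ in_ball origin R0 p.

(* A finite set of lines: duplicate-free list; cardinality = length. *)
Definition card (L : list pt) : R := INR (length L).

Definition count_in_ball (L : list pt) (x : pt) (s : R) : R :=
  INR (length (filter (in_ballb x s) L)).

Definition separated (rho : R) (L : list pt) : Prop :=
  forall p q, In p L -> In q L -> p <> q -> rho <= dist4 p q.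

Definition frostman2 (t : R) (L : list pt) : Prop :=
  forall (s : R) (x : pt), t <= s <= 1 -> count_in_ball L x s <= (s / t)^2.

Definition sublist (L' L : list pt) : Prop := NoDup L' /\ incl L' L.

(* Both parts come from one greedy selection.  Keep a maximal subfamily S of
   the given lines that satisfies the Frostman bound at scale rho.  Every
   rejected line lies in a ball B(x,s), rho <= s <= 1, on which S is already
   rich: (s/rho)^2 <= 2 #(S ∩ B).  A Vitali selection among these balls gives
   disjoint rich balls whose threefold dilates cover the rejected lines, so
   #S dominates the sum of (s/rho)^2 over them, and it remains to count the
   lines in a dilated rich ball.
   For (ii) the dilated ball is covered by boundedly many balls of radius s,
   and the Frostman hypothesis on L gives O((s/delta)^2) lines of L in it.
   For (i) we use that SL_2 is three-dimensional: at each point of SL_2 some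
   coordinate has absolute value at least 1/2, and ad - bc = 1 then
   determines the opposite coordinate Lipschitz-continuously from the other
   three; hence a rho-separated set in a ball of radius t has O((t/rho)^3)
   elements, which interpolated with #Lt = O((r/rho)^3) gives
   O((r/rho) (s/rho)^2).  Part (ii) even holds without the factor delta^eps. *)

From Stdlib Require Import Reals List Lra Lia Psatz Classical ZArith.
Import ListNotations.
Open Scope R_scope.

Lemma dist4_sym (p q : pt) : dist4 p q = dist4 q p.
Proof.
  destruct p as [[[a b] c] d], q as [[[a' b'] c'] d']; simpl; f_equal; ring.
Qed.

Lemma dist4_refl (p : pt) : dist4 p p = 0.
Proof.
  destruct p as [[[a b] c] d]; unfold dist4.
  rewrite !Rminus_diag. replace (0^2 + 0^2 + 0^2 + 0^2) with 0 by ring. exact sqrt_0.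
Qed.

Lemma sqrt_sum_sq_triangle (u1 u2 u3 u4 v1 v2 v3 v4 : R) :
  sqrt ((u1 + v1)^2 + (u2 + v2)^2 + (u3 + v3)^2 + (u4 + v4)^2) <=
  sqrt (u1^2 + u2^2 + u3^2 + u4^2) + sqrt (v1^2 + v2^2 + v3^2 + v4^2).
Proof.
  set (U := u1^2 + u2^2 + u3^2 + u4^2); set (V := v1^2 + v2^2 + v3^2 + v4^2).
  assert (HU : 0 <= U) by (unfold U; nra). assert (HV : 0 <= V) by (unfold V; nra).
  assert (cauchy_schwarz : u1*v1 + u2*v2 + u3*v3 + u4*v4 <= sqrt U * sqrt V).
  { rewrite <- sqrt_mult by lra.
    destruct (Rle_dec (u1*v1 + u2*v2 + u3*v3 + u4*v4) 0); [pose proof (sqrt_pos (U * V)); lra|].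
    rewrite <- (sqrt_pow2 (u1*v1 + u2*v2 + u3*v3 + u4*v4)) by lra.
    apply sqrt_le_1_alt; unfold U, V.
    (* Lagrange's identity: U V - (u.v)^2 is the following sum of squares *)
    assert (0 <= (u1*v2 - u2*v1)^2 + (u1*v3 - u3*v1)^2 + (u1*v4 - u4*v1)^2
                 + (u2*v3 - u3*v2)^2 + (u2*v4 - u4*v2)^2 + (u3*v4 - u4*v3)^2)
      by (repeat apply Rplus_le_le_0_compat; apply pow2_ge_0).
    nra. }
  pose proof (sqrt_pos U); pose proof (sqrt_pos V).
  rewrite <- (sqrt_pow2 (sqrt U + sqrt V)) by lra.
  apply sqrt_le_1_alt.
  replace ((sqrt U + sqrt V)^2) with (sqrt U ^ 2 + sqrt V ^ 2 + 2 * (sqrt U * sqrt V)) by ring.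
  rewrite !pow2_sqrt by lra.
  replace ((u1 + v1)^2 + (u2 + v2)^2 + (u3 + v3)^2 + (u4 + v4)^2)
    with (U + V + 2 * (u1*v1 + u2*v2 + u3*v3 + u4*v4)) by (unfold U, V; ring).
  lra.
Qed.

Lemma dist4_triangle (p q r : pt) : dist4 p r <= dist4 p q + dist4 q r.
Proof.
  destruct p as [[[a b] c] d], q as [[[a' b'] c'] d'], r as [[[a'' b''] c''] d'']; unfold dist4.
  pose proof (sqrt_sum_sq_triangle (a - a') (b - b') (c - c') (d - d')
                (a' - a'') (b' - b'') (c' - c'') (d' - d'')) as H.
  replace (a - a'') with (a - a' + (a' - a'')) by ring.
  replace (b - b'') with (b - b' + (b' - b'')) by ring.
  replace (c - c'') with (c - c' + (c' - c'')) by ring.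
  replace (d - d'') with (d - d' + (d' - d'')) by ring.
  exact H.
Qed.

Lemma Rabs_sub_le_dist4 a b c d a' b' c' d' :
  let r := dist4 (a, b, c, d) (a', b', c', d') in
  Rabs (a - a') <= r /\ Rabs (b - b') <= r /\ Rabs (c - c') <= r /\ Rabs (d - d') <= r.
Proof.
  assert (H : forall x s, x^2 <= s -> Rabs x <= sqrt s).
  { intros x s Hx. rewrite <- sqrt_Rsqr_abs. apply sqrt_le_1_alt. unfold Rsqr. lra. }
  pose proof (pow2_ge_0 (a - a')); pose proof (pow2_ge_0 (b - b')).
  pose proof (pow2_ge_0 (c - c')); pose proof (pow2_ge_0 (d - d')).
  unfold dist4; repeat split; apply H; lra.
Qed.

Lemma dist4_lt_of_sq a b c d a' b' c' d' r : 0 <= r ->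
  (a - a')^2 + (b - b')^2 + (c - c')^2 + (d - d')^2 < r^2 ->
  dist4 (a, b, c, d) (a', b', c', d') < r.
Proof.
  intros Hr H. unfold dist4. rewrite <- (sqrt_pow2 r Hr). apply sqrt_lt_1_alt.
  pose proof (pow2_ge_0 (a - a')); pose proof (pow2_ge_0 (b - b')).
  pose proof (pow2_ge_0 (c - c')); pose proof (pow2_ge_0 (d - d')). lra.
Qed.

Definition sum_list {X : Type} (f : X -> R) (l : list X) : R :=
  fold_right (fun x acc => f x + acc) 0 l.

Lemma sum_list_app {X} (f : X -> R) l1 l2 :
  sum_list f (l1 ++ l2) = sum_list f l1 + sum_list f l2.
Proof. induction l1 as [|x l1 IH]; simpl; [|rewrite IH]; ring. Qed.

Lemma sum_list_map {X Y} (f : Y -> R) (g : X -> Y) l :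
  sum_list f (map g l) = sum_list (fun x => f (g x)) l.
Proof. induction l as [|x l IH]; simpl; [|rewrite IH]; ring. Qed.

Lemma sum_list_le {X} (f g : X -> R) l :
  (forall x, In x l -> f x <= g x) -> sum_list f l <= sum_list g l.
Proof.
  induction l as [|x l IH]; simpl; intros H; [lra|].
  pose proof (H x (or_introl eq_refl)); pose proof (IH (fun y Hy => H y (or_intror Hy))). lra.
Qed.

Lemma sum_list_scal_l {X} (f : X -> R) c l :
  sum_list (fun x => c * f x) l = c * sum_list f l.
Proof. induction l as [|x l IH]; simpl; [|rewrite IH]; ring. Qed.

Lemma sum_list_le_const {X} (f : X -> R) M l :
  (forall x, In x l -> f x <= M) -> sum_list f l <= INR (length l) * M.
Proof.
  induction l as [|x l IH]; intros H; [simpl; lra|].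
  pose proof (H x (or_introl eq_refl)); pose proof (IH (fun y Hy => H y (or_intror Hy))).
  change (f x + sum_list f l <= INR (S (length l)) * M). rewrite S_INR. lra.
Qed.

Lemma length_filter_le_impl {X} (f g : X -> bool) l :
  (forall x, In x l -> f x = true -> g x = true) ->
  (length (filter f l) <= length (filter g l))%nat.
Proof.
  induction l as [|x l IH]; simpl; intros H; [lia|].
  specialize (IH (fun y Hy => H y (or_intror Hy))).
  specialize (H x (or_introl eq_refl)).
  destruct (f x), (g x); simpl; try lia; discriminate (H eq_refl).
Qed.

Lemma length_filter_filter_le {X} (f g : X -> bool) l :
  (length (filter f (filter g l)) <= length (filter f l))%nat.
Proof.
  induction l as [|x l IH]; simpl; [lia|].
  destruct (f x) eqn:Ef, (g x); simpl; rewrite ?Ef; simpl; lia.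
Qed.

Lemma length_filter_filter {X} (f g : X -> bool) l :
  (forall x, In x l -> f x = true -> g x = true) ->
  length (filter f (filter g l)) = length (filter f l).
Proof.
  induction l as [|x l IH]; simpl; intros H; [reflexivity|].
  specialize (IH (fun y Hy => H y (or_intror Hy))).
  specialize (H x (or_introl eq_refl)).
  destruct (f x) eqn:Ef, (g x); simpl; rewrite ?Ef; simpl; try lia; discriminate (H eq_refl).
Qed.

Lemma length_le_sum_filter {J X} (P : J -> X -> bool) (Js : list J) (l : list X) :
  (forall x, In x l -> exists j, In j Js /\ P j x = true) ->
  INR (length l) <= sum_list (fun j => INR (length (filter (P j) l))) Js.
Proof.
  revert l; induction Js as [|j Js IH]; intros l Hcov; simpl.
  - destruct l as [|x l]; [simpl; lra|]. destruct (Hcov x (or_introl eq_refl)) as [? [[] _]].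
  - set (rest := filter (fun x => negb (P j x)) l).
    assert (Hrest : INR (length rest) <= sum_list (fun i => INR (length (filter (P i) l))) Js).
    { eapply Rle_trans.
      - apply IH. intros x Hx. apply filter_In in Hx as [Hx Hnj].
        destruct (Hcov x Hx) as [i [[<- | Hi] Hix]]; [rewrite Hix in Hnj; discriminate|eauto].
      - apply sum_list_le. intros i _. apply le_INR, length_filter_filter_le. }
    rewrite <- (filter_length (P j) l), plus_INR. fold rest. lra.
Qed.

Lemma sum_filter_le_length {J X} (P : J -> X -> bool) (Js : list J) (l : list X) :
  ForallOrdPairs (fun i j => forall x, P i x = true -> P j x = false) Js ->
  sum_list (fun j => INR (length (filter (P j) l))) Js <= INR (length l).
Proof.
  intros Hdisj. revert l. induction Hdisj as [|j Js Hj Hdisj IH]; intros l; simpl.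
  - apply pos_INR.
  - set (rest := filter (fun x => negb (P j x)) l).
    assert (Hsame : sum_list (fun i => INR (length (filter (P i) l))) Js
                    = sum_list (fun i => INR (length (filter (P i) rest))) Js).
    { clear IH Hdisj. induction Hj as [|i Js Hi _ IHJs]; simpl; [reflexivity|]. rewrite IHJs.
      unfold rest. rewrite length_filter_filter; [reflexivity|].
      intros x _ Hix. destruct (P j x) eqn:E; [rewrite (Hi x E) in Hix; discriminate|reflexivity]. }
    rewrite Hsame, <- (filter_length (P j) l), plus_INR. fold rest. specialize (IH rest). lra.
Qed.

Section Fibers.

Context {X K : Type} (K_dec : forall u v : K, {u = v} + {u <> v}) (key : X -> K).

Definition fiber (k : K) (l : list X) : list X :=
  filter (fun x => if K_dec (key x) k then true else false) l.

Lemma in_fiber k l x : In x (fiber k l) <-> In x l /\ key x = k.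
Proof.
  unfold fiber. rewrite filter_In. destruct (K_dec (key x) k); intuition discriminate.
Qed.

Lemma length_fiber_le_filter k l (f : X -> bool) :
  (forall x, In x (fiber k l) -> f x = true) -> (length (fiber k l) <= length (filter f l))%nat.
Proof. intros H. apply length_filter_le_impl. intros x Hx Hk. apply H, filter_In. auto. Qed.

Lemma length_le_fibers (Ks : list K) (l : list X) (M : R) :
  (forall x, In x l -> In (key x) Ks) ->
  (forall k, INR (length (fiber k l)) <= M) ->
  INR (length l) <= INR (length Ks) * M.
Proof.
  intros Hkey Hfib. eapply Rle_trans.
  - apply (length_le_sum_filter (fun k x => if K_dec (key x) k then true else false)).
    intros x Hx. exists (key x). split; [auto|]. destruct (K_dec (key x) (key x)); congruence.
  - apply sum_list_le_const. intros k _. apply Hfib.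
Qed.

End Fibers.

Lemma length_le_1 {X} (l : list X) :
  NoDup l -> (forall x y, In x l -> In y l -> x = y) -> (length l <= 1)%nat.
Proof.
  intros Hnd H. destruct l as [|x [|y l]]; simpl; try lia.
  inversion Hnd as [|? ? Hx]; subst. exfalso. apply Hx. rewrite (H x y); simpl; auto.
Qed.

Lemma one_le_div x y : 0 < y <= x -> 1 <= x / y.
Proof.
  intros Hy. unfold Rdiv. rewrite <- (Rinv_r y) by lra.
  apply Rmult_le_compat_r; [left; apply Rinv_0_lt_compat|]; lra.
Qed.

Definition grid_index (lo h v : R) : nat := Z.to_nat (Int_part ((v - lo) / h)).

Definition grid_size (w h : R) : nat := Z.to_nat (up (w / h)).

Lemma Int_part_nonneg x : 0 <= x -> (0 <= Int_part x)%Z.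
Proof.
  intros Hx. destruct (base_Int_part x).
  assert (-1 < Int_part x)%Z by (apply lt_IZR; lra). lia.
Qed.

Lemma grid_index_lt lo h w v : 0 < h -> lo <= v < lo + w ->
  (grid_index lo h v < grid_size w h)%nat.
Proof.
  intros Hh Hv. unfold grid_index, grid_size.
  assert (Hx : 0 <= (v - lo) / h < w / h).
  { split; [apply Rmult_le_pos; [|left; apply Rinv_0_lt_compat]; lra|].
    apply Rmult_lt_compat_r; [apply Rinv_0_lt_compat|]; lra. }
  pose proof (Int_part_nonneg _ (proj1 Hx)).
  destruct (base_Int_part ((v - lo) / h)). destruct (archimed (w / h)).
  assert (Int_part ((v - lo) / h) < up (w / h))%Z by (apply lt_IZR; lra).
  lia.
Qed.

Lemma grid_index_inj lo h v v' : 0 < h -> lo <= v -> lo <= v' ->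
  grid_index lo h v = grid_index lo h v' -> Rabs (v - v') < h.
Proof.
  intros Hh Hv Hv' E. unfold grid_index in E.
  set (x := (v - lo) / h) in *; set (x' := (v' - lo) / h) in *.
  assert (Hx : 0 <= x) by (apply Rmult_le_pos; [|left; apply Rinv_0_lt_compat]; lra).
  assert (Hx' : 0 <= x') by (apply Rmult_le_pos; [|left; apply Rinv_0_lt_compat]; lra).
  pose proof (Int_part_nonneg x Hx); pose proof (Int_part_nonneg x' Hx').
  assert (Hfl : Int_part x = Int_part x') by lia.
  destruct (base_Int_part x), (base_Int_part x'). rewrite Hfl in *.
  assert (Hvv : v - v' = h * (x - x')) by (unfold x, x'; field; lra).
  apply Rabs_def1; nra.
Qed.

Lemma grid_size_le w h : 0 < w -> 0 < h -> INR (grid_size w h) <= w / h + 1.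
Proof.
  intros Hw Hh. unfold grid_size. destruct (archimed (w / h)).
  assert (0 < w / h) by (apply Rdiv_lt_0_compat; lra).
  assert (0 < up (w / h))%Z by (apply lt_IZR; lra).
  rewrite INR_IZR_INZ, Z2Nat.id by lia. lra.
Qed.

Lemma in_ballb_true x s p : in_ballb x s p = true <-> dist4 p x < s.
Proof. unfold in_ballb. destruct Rlt_dec; split; congruence || contradiction. Qed.

Lemma Rabs_sub_lt_of_dist4 a b c d a' b' c' d' t :
  dist4 (a, b, c, d) (a', b', c', d') < t ->
  Rabs (a - a') < t /\ Rabs (b - b') < t /\ Rabs (c - c') < t /\ Rabs (d - d') < t.
Proof. intros Ht. pose proof (Rabs_sub_le_dist4 a b c d a' b' c' d') as H. cbv zeta in H. lra. Qed.

Definition box_cell3 (h t : R) (y p : pt) : nat * nat * nat :=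
  let '(a, b, c, _) := p in
  let '(ya, yb, yc, _) := y in
  (grid_index (ya - t) h a, grid_index (yb - t) h b, grid_index (yc - t) h c).

Definition box_cell4 (h t : R) (y p : pt) : nat * nat * nat * nat :=
  (box_cell3 h t y p, let '(_, _, _, d) := p in let '(_, _, _, yd) := y in grid_index (yd - t) h d).

Definition grid3 (n : nat) : list (nat * nat * nat) :=
  list_prod (list_prod (seq 0 n) (seq 0 n)) (seq 0 n).

Lemma grid_index_in_seq h t u y : 0 < h -> Rabs (u - y) < t ->
  In (grid_index (y - t) h u) (seq 0 (grid_size (2 * t) h)).
Proof.
  intros Hh Hu. apply Rabs_def2 in Hu. apply in_seq. split; [lia|].
  simpl. apply grid_index_lt; lra.
Qed.

Lemma grid_index_close h t u u' y : 0 < h -> Rabs (u - y) < t -> Rabs (u' - y) < t ->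
  grid_index (y - t) h u = grid_index (y - t) h u' -> Rabs (u - u') < h.
Proof. intros Hh Hu Hu'. apply Rabs_def2 in Hu, Hu'. apply grid_index_inj; lra. Qed.

Lemma box_cell3_in_grid h t y p : 0 < h -> dist4 p y < t ->
  In (box_cell3 h t y p) (grid3 (grid_size (2 * t) h)).
Proof.
  intros Hh Hp. destruct p as [[[a b] c] d], y as [[[ya yb] yc] yd].
  apply Rabs_sub_lt_of_dist4 in Hp as (Ha & Hb & Hc & _).
  repeat apply in_prod; apply grid_index_in_seq; auto.
Qed.

Lemma box_cell4_in_grid h t y p : 0 < h -> dist4 p y < t ->
  In (box_cell4 h t y p) (list_prod (grid3 (grid_size (2 * t) h)) (seq 0 (grid_size (2 * t) h))).
Proof.
  intros Hh Hp. pose proof (box_cell3_in_grid h t y p Hh Hp).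
  destruct p as [[[a b] c] d], y as [[[ya yb] yc] yd].
  apply Rabs_sub_lt_of_dist4 in Hp as (_ & _ & _ & Hd).
  apply in_prod; [assumption|]. apply grid_index_in_seq; auto.
Qed.

Lemma box_cell3_close h t y a b c d a' b' c' d' : 0 < h ->
  dist4 (a, b, c, d) y < t -> dist4 (a', b', c', d') y < t ->
  box_cell3 h t y (a, b, c, d) = box_cell3 h t y (a', b', c', d') ->
  Rabs (a - a') < h /\ Rabs (b - b') < h /\ Rabs (c - c') < h.
Proof.
  intros Hh Hp Hq E. destruct y as [[[ya yb] yc] yd].
  apply Rabs_sub_lt_of_dist4 in Hp as (Ha & Hb & Hc & _), Hq as (Ha' & Hb' & Hc' & _).
  simpl in E. injection E as Ea Eb Ec.
  repeat split; eapply grid_index_close; eauto.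
Qed.

Lemma box_cell4_close h t y p q : 0 < h -> dist4 p y < t -> dist4 q y < t ->
  box_cell4 h t y p = box_cell4 h t y q -> dist4 p q < 2 * h.
Proof.
  intros Hh Hp Hq E. injection E as E3 Ed.
  destruct p as [[[a b] c] d], q as [[[a' b'] c'] d'], y as [[[ya yb] yc] yd].
  destruct (box_cell3_close h t _ a b c d a' b' c' d' Hh Hp Hq E3) as (Ha & Hb & Hc).
  apply Rabs_sub_lt_of_dist4 in Hp as (_ & _ & _ & Hd), Hq as (_ & _ & _ & Hd').
  pose proof (grid_index_close h t d d' yd Hh Hd Hd' Ed) as Hdd.
  apply dist4_lt_of_sq; [lra|].
  rewrite <- (pow2_abs (a - a')), <- (pow2_abs (b - b')),
          <- (pow2_abs (c - c')), <- (pow2_abs (d - d')).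
  pose proof (Rabs_pos (a - a')); pose proof (Rabs_pos (b - b')).
  pose proof (Rabs_pos (c - c')); pose proof (Rabs_pos (d - d')). nra.
Qed.

Definition det (p : pt) : R := let '(a, b, c, d) := p in a * d - b * c.

Definition sl2_chart (k : nat) (p : pt) : pt :=
  let '(a, b, c, d) := p in
  match k with
  | 0 => (a, b, c, d)
  | 1 => (b, a, d, c)
  | 2 => (c, d, a, b)
  | _ => (d, c, b, a)
  end.

Definition pivot (p : pt) : nat :=
  let '(a, b, c, _) := p in
  if Rle_dec (1/2) (Rabs a) then 0
  else if Rle_dec (1/2) (Rabs b) then 1
  else if Rle_dec (1/2) (Rabs c) then 2
  else 3.

Lemma dist4_sl2_chart k p q : dist4 (sl2_chart k p) (sl2_chart k q) = dist4 p q.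
Proof.
  destruct p as [[[a b] c] d], q as [[[a' b'] c'] d'].
  destruct k as [|[|[|k]]]; unfold sl2_chart, dist4; f_equal; ring.
Qed.

Lemma sl2_chart_origin k : sl2_chart k origin = origin.
Proof. destruct k as [|[|[|k]]]; reflexivity. Qed.

Lemma det_sl2_chart k p q : det p = det q -> det (sl2_chart k p) = det (sl2_chart k q).
Proof.
  destruct p as [[[a b] c] d], q as [[[a' b'] c'] d'].
  destruct k as [|[|[|k]]]; simpl; lra.
Qed.

Lemma pivot_lt p : (pivot p < 4)%nat.
Proof.
  destruct p as [[[a b] c] d]; unfold pivot.
  repeat destruct Rle_dec; lia.
Qed.

Lemma pivot_spec p : det p = 1 ->
  let '(a, _, _, _) := sl2_chart (pivot p) p in 1/2 <= Rabs a.
Proof.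
  destruct p as [[[a b] c] d]; simpl det; intros Hdet; unfold pivot.
  destruct Rle_dec as [Ha|Ha]; [exact Ha|].
  destruct Rle_dec as [Hb|Hb]; [exact Hb|].
  destruct Rle_dec as [Hc|Hc]; [exact Hc|].
  simpl. apply Rnot_le_lt in Ha, Hb, Hc.
  (* |a|, |b|, |c| < 1/2 forces |a d| > 3/4, hence |d| > 3/2 *)
  assert (Hbc : Rabs (b * c) < 1/4)
    by (rewrite Rabs_mult; pose proof (Rabs_pos b); pose proof (Rabs_pos c); nra).
  assert (Had : 3/4 < Rabs a * Rabs d).
  { rewrite <- Rabs_mult. replace (a * d) with (1 + b * c) by lra.
    pose proof (Rabs_triang_inv 1 (- (b * c))) as Htri. rewrite Rabs_Ropp, Rabs_R1 in Htri.
    replace (1 - - (b * c)) with (1 + b * c) in Htri by ring. lra. }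
  pose proof (Rabs_pos a); pose proof (Rabs_pos d). nra.
Qed.

Lemma det_eq_coord_lipschitz a b c d a' b' c' d' M :
  a * d - b * c = a' * d' - b' * c' -> 1/2 <= Rabs a ->
  Rabs b <= M -> Rabs c' <= M -> Rabs d' <= M ->
  Rabs (d - d') <= 2 * M * (Rabs (a - a') + Rabs (b - b') + Rabs (c - c')).
Proof.
  intros Hdet Ha Hb Hc' Hd'.
  assert (Hid : a * (d - d') = b * (c - c') + c' * (b - b') - d' * (a - a')) by lra.
  assert (Hbound : Rabs a * Rabs (d - d') <= M * (Rabs (a - a') + Rabs (b - b') + Rabs (c - c'))).
  { rewrite <- Rabs_mult, Hid. unfold Rminus at 1.
    eapply Rle_trans; [apply Rabs_triang|]. rewrite Rabs_Ropp.
    eapply Rle_trans; [apply Rplus_le_compat_r, Rabs_triang|]. rewrite !Rabs_mult.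
    pose proof (Rabs_pos (a - a')); pose proof (Rabs_pos (b - b')); pose proof (Rabs_pos (c - c')).
    nra. }
  pose proof (Rabs_pos (d - d')). nra.
Qed.

Lemma Rabs_coord_lt_of_in_ball a b c d M : in_ball origin M (a, b, c, d) ->
  Rabs a < M /\ Rabs b < M /\ Rabs c < M /\ Rabs d < M.
Proof.
  unfold in_ball, origin. intros H.
  apply Rabs_sub_lt_of_dist4 in H. rewrite !Rminus_0_r in H. exact H.
Qed.

Lemma dist4_lt_of_det_eq M h a b c d a' b' c' d' : 1 <= M -> 0 < h ->
  det (a, b, c, d) = det (a', b', c', d') -> 1/2 <= Rabs a ->
  in_ball origin M (a, b, c, d) -> in_ball origin M (a', b', c', d') ->
  Rabs (a - a') < h -> Rabs (b - b') < h -> Rabs (c - c') < h ->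
  dist4 (a, b, c, d) (a', b', c', d') < 7 * M * h.
Proof.
  intros HM Hh Hdet Ha Hp Hq Haa Hbb Hcc.
  apply Rabs_coord_lt_of_in_ball in Hp as (_ & Hb & _ & _), Hq as (_ & _ & Hc' & Hd').
  pose proof (det_eq_coord_lipschitz a b c d a' b' c' d' M Hdet Ha
                ltac:(lra) ltac:(lra) ltac:(lra)) as Hdd.
  set (e := M * h).
  assert (He : h <= e) by (unfold e; nra).
  assert (Hdd' : Rabs (d - d') <= 6 * e) by (unfold e; nra).
  assert (Hsq : forall x r, Rabs x <= r -> x^2 <= r^2).
  { intros x r Hx. rewrite <- pow2_abs. apply pow_incr. split; [apply Rabs_pos|exact Hx]. }
  pose proof (Hsq (a - a') e ltac:(lra)); pose proof (Hsq (b - b') e ltac:(lra)).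
  pose proof (Hsq (c - c') e ltac:(lra)); pose proof (Hsq (d - d') (6 * e) Hdd').
  assert (0 < e^2) by (apply pow_lt; lra).
  apply dist4_lt_of_sq; [unfold e; nra|].
  replace ((7 * M * h)^2) with (49 * e^2) by (unfold e; ring).
  replace ((6 * e)^2) with (36 * e^2) in * by ring. lra.
Qed.

Definition sl2_cell (h t : R) (y p : pt) : nat * (nat * nat * nat) :=
  (pivot p, box_cell3 h t (sl2_chart (pivot p) y) (sl2_chart (pivot p) p)).

Definition sl2_cell_eq_dec (u v : nat * (nat * nat * nat)) : {u = v} + {u <> v}.
Proof. repeat decide equality. Defined.

Lemma sl2_cell_in_grid h t y p : 0 < h -> dist4 p y < t ->
  In (sl2_cell h t y p) (list_prod (seq 0 4) (grid3 (grid_size (2 * t) h))).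
Proof.
  intros Hh Hp. apply in_prod.
  - apply in_seq. pose proof (pivot_lt p). lia.
  - apply box_cell3_in_grid; [exact Hh|]. rewrite dist4_sl2_chart. exact Hp.
Qed.

Lemma det_of_admissible R0 p : admissible R0 p -> det p = 1.
Proof. destruct p as [[[a b] c] d]. intros [H _]. exact H. Qed.

Lemma sl2_cell_close R0 h t y p q : 1 <= R0 -> 0 < h -> admissible R0 p -> admissible R0 q ->
  dist4 p y < t -> dist4 q y < t -> sl2_cell h t y p = sl2_cell h t y q ->
  dist4 p q < 7 * R0 * h.
Proof.
  intros HR Hh Hap Haq Hp Hq E.
  pose proof (det_of_admissible R0 p Hap) as Hdp; pose proof (det_of_admissible R0 q Haq) as Hdq.
  destruct Hap as [_ Hbp], Haq as [_ Hbq].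
  unfold sl2_cell in E. injection E as Ek Ecell. rewrite <- Ek in Ecell.
  pose proof (pivot_spec p Hdp) as Hpiv.
  pose proof (det_sl2_chart (pivot p) p q (eq_trans Hdp (eq_sym Hdq))) as Hdet.
  unfold in_ball in Hbp, Hbq.
  rewrite <- (dist4_sl2_chart (pivot p)), sl2_chart_origin in Hbp, Hbq.
  rewrite <- (dist4_sl2_chart (pivot p)) in Hp, Hq |- *.
  destruct (sl2_chart (pivot p) p) as [[[a b] c] d].
  destruct (sl2_chart (pivot p) q) as [[[a' b'] c'] d'].
  destruct (box_cell3_close h t _ a b c d a' b' c' d' Hh Hp Hq Ecell) as (Ha & Hb & Hc).
  apply dist4_lt_of_det_eq; auto.
Qed.

Lemma count_separated_sl2_le R0 rho Lt y t : 1 <= R0 -> 0 < rho <= t -> NoDup Lt ->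
  (forall p, In p Lt -> admissible R0 p) -> separated rho Lt ->
  count_in_ball Lt y t <= 4 * (15 * R0)^3 * (t / rho)^3.
Proof.
  intros HR Hrho Hnd Hadm Hsep.
  set (h := rho / (7 * R0)).
  assert (Hh : 0 < h) by (apply Rdiv_lt_0_compat; lra).
  set (n := grid_size (2 * t) h).
  unfold count_in_ball. eapply Rle_trans.
  - apply (length_le_fibers sl2_cell_eq_dec (sl2_cell h t y) (list_prod (seq 0 4) (grid3 n)) _ 1).
    + intros z Hz. apply filter_In in Hz as [_ Hz]. apply sl2_cell_in_grid; [exact Hh|].
      apply in_ballb_true, Hz.
    + intros k. apply (le_INR _ 1), length_le_1; [apply NoDup_filter, NoDup_filter, Hnd|].
      intros p q Hp Hq.
      apply in_fiber in Hp as [Hp Ep], Hq as [Hq Eq].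
      apply filter_In in Hp as [Hp Hpy], Hq as [Hq Hqy].
      apply in_ballb_true in Hpy, Hqy.
      pose proof (sl2_cell_close R0 h t y p q HR Hh (Hadm p Hp) (Hadm q Hq) Hpy Hqy
                    (eq_trans Ep (eq_sym Eq))) as Hpq.
      replace (7 * R0 * h) with rho in Hpq by (unfold h; field; lra).
      apply NNPP. intros Hneq. pose proof (Hsep p q Hp Hq Hneq). lra.
  - unfold grid3. rewrite !length_prod, !length_seq, !mult_INR.
    assert (Hn : INR n <= 15 * R0 * (t / rho)).
    { unfold n. eapply Rle_trans; [apply grid_size_le; lra|].
      unfold h. replace (2 * t / (rho / (7 * R0))) with (14 * R0 * (t / rho)) by (field; lra).
      assert (1 <= t / rho) by (apply one_le_div; lra). nra. }
    replace (INR 4 * (INR n * INR n * INR n) * 1) with (4 * INR n ^ 3) by (simpl; ring).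
    replace (4 * (15 * R0)^3 * (t / rho)^3) with (4 * (15 * R0 * (t / rho))^3) by ring.
    apply Rmult_le_compat_l; [lra|]. apply pow_incr. split; [apply pos_INR|exact Hn].
Qed.

Definition box_cell4_eq_dec (u v : nat * nat * nat * nat) : {u = v} + {u <> v}.
Proof. repeat decide equality. Defined.

Lemma frostman2_count_dilate L delta s x : 0 < delta <= s -> s <= 1 -> frostman2 delta L ->
  count_in_ball L x (4 * s) <= 17^4 * (s / delta)^2.
Proof.
  intros Hds Hs1 HF.
  set (h := s / 2). set (n := grid_size (2 * (4 * s)) h).
  assert (Hh : 0 < h) by (unfold h; lra).
  set (l := filter (in_ballb x (4 * s)) L).
  assert (Hl : forall z, In z l -> In z L /\ dist4 z x < 4 * s).
  { intros z Hz. apply filter_In in Hz as [Hz Hzx]. apply in_ballb_true in Hzx. auto. }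
  unfold count_in_ball. fold l. eapply Rle_trans.
  - apply (length_le_fibers box_cell4_eq_dec (box_cell4 h (4 * s) x)
             (list_prod (grid3 n) (seq 0 n)) _ ((s / delta)^2)).
    + intros z Hz. apply box_cell4_in_grid; [exact Hh|]. apply Hl, Hz.
    + intros k. destruct (fiber box_cell4_eq_dec (box_cell4 h (4 * s) x) k l)
        as [|z0 rest] eqn:Efib; [simpl; apply pow2_ge_0|].
      assert (Hz0 : In z0 (fiber box_cell4_eq_dec (box_cell4 h (4 * s) x) k l))
        by (rewrite Efib; left; reflexivity).
      rewrite <- Efib. eapply Rle_trans; [|apply (HF s z0); lra].
      apply le_INR. eapply Nat.le_trans; [apply (length_fiber_le_filter _ _ _ _ (in_ballb z0 s))|].
      * intros z Hz. apply in_ballb_true.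
        apply in_fiber in Hz as [Hz Ez], Hz0 as [Hz0 Ez0].
        replace s with (2 * h) by (unfold h; field).
        apply (box_cell4_close h (4 * s) x); [exact Hh|apply Hl, Hz|apply Hl, Hz0|congruence].
      * apply length_filter_filter_le.
  - unfold grid3. rewrite !length_prod, !length_seq, !mult_INR.
    assert (Hn : INR n <= 17).
    { unfold n. eapply Rle_trans; [apply grid_size_le; lra|].
      unfold h. replace (2 * (4 * s) / (s / 2)) with 16 by (field; lra). lra. }
    replace (INR n * INR n * INR n * INR n) with (INR n ^ 4) by ring.
    apply Rmult_le_compat_r; [apply pow2_ge_0|]. apply pow_incr. split; [apply pos_INR|exact Hn].
Qed.

Section MaximalSublist.

Context {A : Type} (P : list A -> Prop).
Hypothesis P_nil : P [].
Hypothesis P_hereditary : forall l l', NoDup l' -> incl l' l -> P l -> P l'.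

Lemma exists_maximal_sublist (Q : list A) :
  exists S, NoDup S /\ incl S Q /\ P S /\ forall q, In q Q -> ~ In q S -> ~ P (q :: S).
Proof.
  induction Q as [|a Q IH].
  - exists []. repeat split; [constructor|intros x []|exact P_nil|intros q []].
  - destruct IH as [S (Hnd & Hincl & HP & Hmax)].
    destruct (classic (~ In a S /\ P (a :: S))) as [[HaS Ha]|Hna].
    + exists (a :: S). repeat split.
      * constructor; assumption.
      * apply incl_cons; [left; reflexivity|apply incl_tl, Hincl].
      * exact Ha.
      * intros q [<-|Hq] HqaS HPq; [apply HqaS; left; reflexivity|].
        assert (HqS : ~ In q S) by (intros HqS; apply HqaS; right; exact HqS).
        apply (Hmax q Hq HqS), (P_hereditary (q :: a :: S));
          [apply NoDup_cons; assumption| |exact HPq].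
        intros z [<-|Hz]; simpl; auto.
    + exists S. repeat split; [assumption|apply incl_tl, Hincl|assumption|].
      intros q [<-|Hq] HqS; [|apply Hmax; assumption]. intros Hq'. apply Hna. auto.
Qed.

End MaximalSublist.

Lemma frostman2_nil t : frostman2 t [].
Proof. intros s x _. unfold count_in_ball. simpl. apply pow2_ge_0. Qed.

Lemma frostman2_incl t l l' : NoDup l' -> incl l' l -> frostman2 t l -> frostman2 t l'.
Proof.
  intros Hnd Hincl HF s x Hs. eapply Rle_trans; [|apply (HF s x Hs)].
  apply le_INR, NoDup_incl_length; [apply NoDup_filter, Hnd|].
  intros z. rewrite !filter_In. intuition.
Qed.

Definition rich_ball (rho : R) (S : list pt) (B : pt * R) : Prop :=
  rho <= snd B <= 1 /\ (snd B / rho)^2 <= 2 * count_in_ball S (fst B) (snd B).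

Lemma frostman2_cons_rich rho S q : 0 < rho -> frostman2 rho S -> ~ frostman2 rho (q :: S) ->
  exists B, rich_ball rho S B /\ dist4 q (fst B) < snd B.
Proof.
  intros Hrho HS Hq. unfold frostman2 in Hq.
  apply not_all_ex_not in Hq as [s Hq]. apply not_all_ex_not in Hq as [x Hq].
  apply imply_to_and in Hq as [Hs Hq]. specialize (HS s x Hs).
  assert (Hone : 1 <= (s / rho)^2) by (pose proof (one_le_div s rho ltac:(lra)); nra).
  exists (x, s). unfold rich_ball, count_in_ball in *; cbn [fst snd].
  cbn [filter] in Hq. destruct (in_ballb x s q) eqn:Eq; [|lra].
  split; [split; [exact Hs|]|apply in_ballb_true, Eq].
  cbn [length] in Hq. rewrite S_INR in Hq.
  destruct (length (filter (in_ballb x s) S)) as [|m]; [simpl in Hq; lra|].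
  rewrite S_INR in *. pose proof (pos_INR m). lra.
Qed.

Definition balls_meet (B B' : pt * R) : Prop := dist4 (fst B) (fst B') < snd B + snd B'.

Definition disjoint_balls (D : list (pt * R)) : Prop :=
  ForallOrdPairs (fun B B' => ~ balls_meet B B') D.

Lemma exists_max_radius (Bs : list (pt * R)) : Bs <> [] ->
  exists M, In M Bs /\ forall B, In B Bs -> snd B <= snd M.
Proof.
  induction Bs as [|B0 Bs IH]; intros Hne; [congruence|].
  destruct Bs as [|B1 Bs].
  - exists B0. split; [left; reflexivity|]. intros B [<-|[]]. lra.
  - destruct IH as [M [HM Hmax]]; [discriminate|].
    destruct (Rle_dec (snd B0) (snd M)).
    + exists M. split; [right; exact HM|]. intros B [<-|HB]; auto.
    + exists B0. split; [left; reflexivity|]. intros B [<-|HB]; [lra|]. specialize (Hmax B HB). lra.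
Qed.

Lemma vitali_covering (Bs : list (pt * R)) : (forall B, In B Bs -> 0 < snd B) ->
  exists D, incl D Bs /\ disjoint_balls D /\
    forall B, In B Bs -> exists B', In B' D /\ balls_meet B B' /\ snd B <= snd B'.
Proof.
  remember (length Bs) as n eqn:En. revert Bs En.
  induction n as [n IH] using lt_wf_ind. intros Bs En Hpos.
  destruct Bs as [|B0 Bs0] eqn:EBs.
  { exists []. repeat split; [intros ? []|constructor|intros ? []]. }
  rewrite <- EBs in *. destruct (exists_max_radius Bs) as [M [HM Hmax]]; [congruence|].
  set (far := fun B : pt * R =>
    if Rlt_dec (dist4 (fst B) (fst M)) (snd B + snd M) then false else true).
  assert (Hfar : forall B, In B (filter far Bs) <-> In B Bs /\ ~ balls_meet B M).
  { intros B. rewrite filter_In. unfold far, balls_meet. destruct Rlt_dec; intuition discriminate. }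
  assert (Hlen : (length (filter far Bs) < n)%nat).
  { subst n. rewrite <- (filter_length far Bs).
    destruct (filter (fun B => negb (far B)) Bs) as [|B' rest] eqn:Enear; [|simpl; lia].
    exfalso. assert (HMn : In M (filter (fun B => negb (far B)) Bs)).
    { apply filter_In. split; [exact HM|]. unfold far. rewrite dist4_refl.
      specialize (Hpos M HM). destruct Rlt_dec; [reflexivity|lra]. }
    rewrite Enear in HMn. destruct HMn. }
  destruct (IH _ Hlen (filter far Bs) eq_refl) as [D (Hincl & Hdisj & Hcov)].
  { intros B HB. apply Hpos, Hfar, HB. }
  exists (M :: D). repeat split.
  - intros B [<-|HB]; [exact HM|]. apply Hfar, Hincl, HB.
  - constructor; [|exact Hdisj]. apply Forall_forall. intros B HB HMB.
    apply (proj2 (proj1 (Hfar B) (Hincl B HB))).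
    unfold balls_meet in *. rewrite dist4_sym. lra.
  - intros B HB. destruct (classic (balls_meet B M)) as [HBM|HBM].
    + exists M. split; [left; reflexivity|]. split; [exact HBM|]. apply Hmax, HB.
    + destruct (Hcov B) as [B' (HB' & Hmeet & Hle)]; [apply Hfar; auto|].
      exists B'. split; [right; exact HB'|]. auto.
Qed.

Lemma sum_count_disjoint_balls_le (D : list (pt * R)) (S : list pt) : disjoint_balls D ->
  sum_list (fun B => count_in_ball S (fst B) (snd B)) D <= INR (length S).
Proof.
  intros Hdisj. apply (sum_filter_le_length (fun B => in_ballb (fst B) (snd B))).
  induction Hdisj as [|B D HB Hdisj IH]; constructor; [|exact IH].
  eapply Forall_impl; [|exact HB]. intros B' HBB' z Hz.
  destruct (in_ballb (fst B') (snd B') z) eqn:Ez; [|reflexivity].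
  exfalso. apply HBB'. apply in_ballb_true in Hz, Ez. unfold balls_meet.
  pose proof (dist4_triangle (fst B) z (fst B')). rewrite dist4_sym in Hz. lra.
Qed.

Lemma finite_witnesses {X Y} (P : X -> Prop) (Q : Y -> Prop) (G : X -> Y -> Prop) (l : list X) :
  (forall x, In x l -> P x -> exists y, Q y /\ G x y) ->
  exists ys, (forall y, In y ys -> Q y) /\ forall x, In x l -> P x -> exists y, In y ys /\ G x y.
Proof.
  induction l as [|x l IH]; intros H.
  - exists []. split; [intros ? []|intros ? []].
  - destruct IH as [ys [HQ HG]]; [intros x' Hx'; apply H; right; exact Hx'|].
    destruct (classic (P x)) as [Px|nPx].
    + destruct (H x (or_introl eq_refl) Px) as [y [Qy Gy]].
      exists (y :: ys). split; [intros y' [<-|Hy']; auto|].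
      intros x' [<-|Hx'] Px'; [exists y; split; [left|]; auto|].
      destruct (HG x' Hx' Px') as [y' [? ?]]. exists y'. split; [right|]; auto.
    + exists ys. split; [exact HQ|]. intros x' [<-|Hx'] Px'; [contradiction|auto].
Qed.

Lemma frostman2_selection rho Lt : 0 < rho ->
  exists S D, sublist S Lt /\ frostman2 rho S /\ disjoint_balls D /\
    (forall B, In B D -> rich_ball rho S B) /\
    forall q, In q Lt -> In q S \/ exists B, In B D /\ dist4 q (fst B) < 3 * snd B.
Proof.
  intros Hrho.
  destruct (exists_maximal_sublist (frostman2 rho) (frostman2_nil rho)
              (fun l l' Hnd Hincl => frostman2_incl rho l l' Hnd Hincl) Lt)
    as [S (Hnd & Hincl & HF & Hmax)].
  destruct (finite_witnesses (fun q => ~ In q S) (rich_ball rho S)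
              (fun q B => dist4 q (fst B) < snd B) Lt) as [Bs [Hrich Hwit]].
  { intros q Hq HqS. exact (frostman2_cons_rich rho S q Hrho HF (Hmax q Hq HqS)). }
  destruct (vitali_covering Bs) as [D (HDincl & Hdisj & Hcov)].
  { intros B HB. destruct (Hrich B HB) as [[? _] _]. lra. }
  exists S, D. split; [split; assumption|]. split; [exact HF|]. split; [exact Hdisj|].
  split; [intros B HB; apply Hrich, HDincl, HB|].
  intros q Hq. destruct (classic (In q S)) as [HqS|HqS]; [left; exact HqS|right].
  destruct (Hwit q Hq HqS) as [B [HB HqB]]. destruct (Hcov B HB) as [B' (HB' & Hmeet & Hle)].
  exists B'. split; [exact HB'|]. unfold balls_meet in Hmeet.
  (* B meets B' and is not larger, so it lies in the threefold dilate of B' *)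
  pose proof (dist4_triangle q (fst B) (fst B')). lra.
Qed.

Lemma length_le_of_rich_cover rho S D (X : list pt) a k M1 M2 :
  0 <= M2 -> disjoint_balls D -> (forall B, In B D -> rich_ball rho S B) ->
  (forall x, In x X ->
     (exists q, In q S /\ dist4 x q < a) \/ (exists B, In B D /\ dist4 x (fst B) < k * snd B)) ->
  (forall q, In q S -> count_in_ball X q a <= M1) ->
  (forall B, In B D -> count_in_ball X (fst B) (k * snd B) <= M2 * (snd B / rho)^2) ->
  INR (length X) <= (M1 + 2 * M2) * INR (length S).
Proof.
  intros HM2 Hdisj Hrich Hcov HS HD.
  eapply Rle_trans.
  { apply (length_le_sum_filter (fun B => in_ballb (fst B) (snd B))
             (map (fun q => (q, a)) S ++ map (fun B => (fst B, k * snd B)) D)).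
    intros x Hx. destruct (Hcov x Hx) as [[q [Hq Hxq]]|[B [HB HxB]]].
    - exists (q, a).
      split; [apply in_or_app; left; apply (in_map (fun q => (q, a))), Hq|].
      apply in_ballb_true, Hxq.
    - exists (fst B, k * snd B).
      split; [apply in_or_app; right; apply (in_map (fun B => (fst B, k * snd B))), HB|].
      apply in_ballb_true, HxB. }
  rewrite sum_list_app, !sum_list_map. cbn [fst snd].
  assert (HsumS : sum_list (fun q => count_in_ball X q a) S <= INR (length S) * M1)
    by (apply sum_list_le_const, HS).
  assert (HsumD : sum_list (fun B => count_in_ball X (fst B) (k * snd B)) D
                  <= 2 * M2 * INR (length S)).
  { eapply Rle_trans; [apply (sum_list_le _ (fun B => 2 * M2 * count_in_ball S (fst B) (snd B)))|].
    - intros B HB. destruct (Hrich B HB) as [_ Hr]. specialize (HD B HB).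
      pose proof (Rmult_le_compat_l M2 _ _ HM2 Hr). lra.
    - rewrite sum_list_scal_l. apply Rmult_le_compat_l; [lra|].
      apply sum_count_disjoint_balls_le, Hdisj. }
  unfold count_in_ball in HsumS, HsumD. lra.
Qed.

Lemma le_mul_sq_of_le_cubes A u v x : 0 <= A -> 0 <= u -> 0 <= v ->
  x <= A * u^3 -> x <= A * v^3 -> x <= A * v * u^2.
Proof.
  intros HA Hu Hv Hxu Hxv. destruct (Rle_dec u v) as [Huv|Hvu].
  - assert (u^3 <= v * u^2)
      by (replace (u^3) with (u * u^2) by ring; apply Rmult_le_compat_r; [apply pow2_ge_0|lra]).
    assert (A * u^3 <= A * (v * u^2)) by (apply Rmult_le_compat_l; lra). lra.
  - assert (v^3 <= v * u^2)
      by (replace (v^3) with (v * v^2) by ring; apply Rmult_le_compat_l; [lra|apply pow_incr; lra]).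
    assert (A * v^3 <= A * (v * u^2)) by (apply Rmult_le_compat_l; lra). lra.
Qed.

Lemma count_separated_half_ball_le_1 rho Lt q : NoDup Lt -> separated rho Lt ->
  count_in_ball Lt q (rho / 2) <= 1.
Proof.
  intros Hnd Hsep. apply (le_INR _ 1), length_le_1; [apply NoDup_filter, Hnd|].
  intros p p' Hp Hp'. apply filter_In in Hp as [Hp Hpq], Hp' as [Hp' Hp'q].
  apply in_ballb_true in Hpq, Hp'q.
  apply NNPP. intros Hneq. pose proof (Hsep p p' Hp Hp' Hneq).
  pose proof (dist4_triangle p q p'). rewrite (dist4_sym q p') in *. lra.
Qed.

Lemma frostman2_sublist_of_separated R0 rho r Lt : 1 <= R0 -> 0 < rho <= r ->
  NoDup Lt -> (forall p, In p Lt -> admissible R0 p) -> separated rho Lt ->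
  (exists x, forall p, In p Lt -> in_ball x r p) ->
  exists S, sublist S Lt /\ frostman2 rho S /\
    rho / r * INR (length Lt) <= (1 + 18 * (4 * (15 * R0)^3)) * INR (length S).
Proof.
  intros HR Hrho Hnd Hadm Hsep [x0 Hx0].
  set (A := 4 * (15 * R0)^3).
  assert (HA : 0 < A) by (unfold A; apply Rmult_lt_0_compat; [lra|apply pow_lt; lra]).
  destruct (frostman2_selection rho Lt ltac:(lra)) as [S [D (HS & HF & Hdisj & Hrich & Hcov)]].
  exists S. split; [exact HS|]. split; [exact HF|].
  assert (Hv : 1 <= r / rho) by (apply one_le_div; lra).
  assert (HLt : INR (length Lt) <= A * (r / rho)^3).
  { eapply Rle_trans; [|apply (count_separated_sl2_le R0 rho Lt x0 r); auto].
    apply le_INR, NoDup_incl_length; [exact Hnd|].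
    intros p Hp. apply filter_In. split; [exact Hp|]. apply in_ballb_true, Hx0, Hp. }
  assert (Hbound : INR (length Lt) <= (1 + 2 * (9 * A * (r / rho))) * INR (length S)).
  { apply (length_le_of_rich_cover rho S D Lt (rho / 2) 3); [nra|exact Hdisj|exact Hrich|..].
    - intros p Hp. destruct (Hcov p Hp) as [HpS|HpD]; [left|right; exact HpD].
      exists p. rewrite dist4_refl. split; [exact HpS|lra].
    - intros q _. apply count_separated_half_ball_le_1; assumption.
    - intros B HB. destruct (Hrich B HB) as [[Hs _] _].
      replace (9 * A * (r / rho) * (snd B / rho)^2) with (A * (r / rho) * (3 * snd B / rho)^2)
        by (field; lra).
      apply le_mul_sq_of_le_cubes;
        [lra|apply Rmult_le_pos; [lra|left; apply Rinv_0_lt_compat; lra]|lra| |].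
      + apply count_separated_sl2_le; auto. lra.
      + eapply Rle_trans; [|exact HLt]. apply le_INR, filter_length_le. }
  pose proof (pos_INR (length S)) as HS0.
  assert (Hinv : 0 < / (r / rho) <= 1).
  { split; [apply Rinv_0_lt_compat; lra|]. rewrite <- Rinv_1. apply Rinv_le_contravar; lra. }
  replace (rho / r) with (/ (r / rho)) by (field; lra).
  apply (Rmult_le_compat_l (/ (r / rho))) in Hbound; [|lra].
  replace (/ (r / rho) * ((1 + 2 * (9 * A * (r / rho))) * INR (length S)))
    with ((/ (r / rho) + 18 * A) * INR (length S)) in Hbound by (field; lra).
  eapply Rle_trans; [exact Hbound|]. apply Rmult_le_compat_r; lra.
Qed.

Lemma frostman2_sublist_of_cover delta rho L Lt : 0 < delta <= rho -> rho <= 1 ->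
  frostman2 delta L -> (forall p, In p L -> exists q, In q Lt /\ in_ball q rho p) ->
  exists S, sublist S Lt /\ frostman2 rho S /\
    (delta / rho)^2 * INR (length L) <= (1 + 2 * 17^4) * INR (length S).
Proof.
  intros Hd Hr1 HF HcovL.
  destruct (frostman2_selection rho Lt ltac:(lra)) as [S [D (HS & HFS & Hdisj & Hrich & Hcov)]].
  exists S. split; [exact HS|]. split; [exact HFS|].
  set (w := (rho / delta)^2). assert (Hw : 0 <= w) by apply pow2_ge_0.
  assert (Hbound : INR (length L) <= (w + 2 * (17^4 * w)) * INR (length S)).
  { apply (length_le_of_rich_cover rho S D L rho 4); [nra|exact Hdisj|exact Hrich|..].
    - intros p Hp. destruct (HcovL p Hp) as [q [Hq Hpq]]. unfold in_ball in Hpq.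
      destruct (Hcov q Hq) as [HqS|[B [HB HqB]]]; [left; exists q; auto|right; exists B].
      destruct (Hrich B HB) as [[Hs _] _].
      pose proof (dist4_triangle p q (fst B)). split; [exact HB|lra].
    - intros q _. apply HF. lra.
    - intros B HB. destruct (Hrich B HB) as [[Hs Hs1] _].
      replace (17^4 * w * (snd B / rho)^2) with (17^4 * (snd B / delta)^2)
        by (unfold w; field; lra).
      apply frostman2_count_dilate; [lra|exact Hs1|exact HF]. }
  assert (Hww : (delta / rho)^2 * w = 1) by (unfold w; field; lra).
  apply (Rmult_le_compat_l ((delta / rho)^2)) in Hbound; [|apply pow2_ge_0].
  replace ((delta / rho)^2 * ((w + 2 * (17^4 * w)) * INR (length S)))
    with ((delta / rho)^2 * w * ((1 + 2 * 17^4) * INR (length S))) in Hbound by ring.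
  rewrite Hww, Rmult_1_l in Hbound. exact Hbound.
Qed.

Lemma Rpower_le_1 x e : 0 < x <= 1 -> 0 <= e -> Rpower x e <= 1.
Proof.
  intros Hx He. eapply Rle_trans; [apply Rle_Rpower_l; [exact He|exact Hx]|].
  unfold Rpower. rewrite ln_1, Rmult_0_r, exp_0. lra.
Qed.

Lemma inv_mul_le_of_le x y K K' : 0 < K -> 1 <= K' -> 0 <= y -> x <= K * y -> / (K * K') * x <= y.
Proof.
  intros HK HK' Hy Hx.
  apply (Rmult_le_compat_l (/ (K * K'))) in Hx; [|left; apply Rinv_0_lt_compat; nra].
  replace (/ (K * K') * (K * y)) with (y / K') in Hx by (field; lra).
  eapply Rle_trans; [exact Hx|]. unfold Rdiv.
  rewrite <- (Rmult_1_r y) at 2. apply Rmult_le_compat_l; [exact Hy|].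
  rewrite <- Rinv_1. apply Rinv_le_contravar; lra.
Qed.

Theorem lemma4p1 :
  forall R0 : R, 1 <= R0 ->
  exists C : R, 0 < C /\
  (* part (i) *)
  (forall (delta rho r : R) (Lt : list pt),
      0 < delta -> delta <= rho -> rho <= r -> r <= 1 ->
      NoDup Lt -> (forall p, In p Lt -> admissible R0 p) ->
      separated rho Lt ->
      (exists x : pt, forall p, In p Lt -> in_ball x r p) ->
      exists Lt' : list pt, sublist Lt' Lt /\
        C * (rho / r) * card Lt <= card Lt' /\ frostman2 rho Lt') /\
  (* part (ii) *)
  (forall eps : R, 0 < eps ->
   exists c : R, 0 < c /\
   forall (delta rho r : R) (L Lt : list pt),
      0 < delta -> delta <= rho -> rho <= r -> r <= 1 ->
      NoDup L -> NoDup Lt ->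
      (forall p, In p L -> admissible R0 p) ->
      (forall p, In p Lt -> admissible R0 p) ->
      frostman2 delta L ->
      (forall p, In p L -> exists q, In q Lt /\ in_ball q rho p) ->
      exists Lt' : list pt, sublist Lt' Lt /\
        C * c * Rpower delta eps * (delta / rho)^2 * card L <= card Lt' /\
        frostman2 rho Lt').
Proof.
  intros R0 HR.
  set (K1 := 1 + 18 * (4 * (15 * R0)^3)). set (K2 := 1 + 2 * 17^4).
  assert (HK1 : 1 <= K1) by (unfold K1; pose proof (pow_lt (15 * R0) 3 ltac:(lra)); lra).
  assert (HK2 : 1 <= K2) by (unfold K2; lra).
  exists (/ (K1 * K2)). split; [apply Rinv_0_lt_compat; nra|]. split.
  - intros delta rho r Lt Hd Hdr Hrr Hr1 Hnd Hadm Hsep Hball.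
    destruct (frostman2_sublist_of_separated R0 rho r Lt HR ltac:(lra) Hnd Hadm Hsep Hball)
      as [S (HS & HF & Hcard)].
    exists S. split; [exact HS|]. split; [|exact HF]. unfold card.
    rewrite Rmult_assoc. apply inv_mul_le_of_le; [lra|lra|apply pos_INR|exact Hcard].
  - intros eps Heps. exists 1. split; [lra|].
    intros delta rho r L Lt Hd Hdr Hrr Hr1 _ _ _ _ HF Hcov.
    destruct (frostman2_sublist_of_cover delta rho L Lt ltac:(lra) ltac:(lra) HF Hcov)
      as [S (HS & HFS & Hcard)].
    exists S. split; [exact HS|]. split; [|exact HFS]. unfold card.
    pose proof (Rpower_le_1 delta eps ltac:(lra) ltac:(lra)) as HP.
    rewrite (Rmult_comm K1 K2).
    pose proof (inv_mul_le_of_le _ _ K2 K1 ltac:(lra) HK1 (pos_INR _) Hcard) as Hbound.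
    assert (0 <= / (K2 * K1) * ((delta / rho)^2 * INR (length L))).
    { apply Rmult_le_pos; [left; apply Rinv_0_lt_compat; nra|].
      apply Rmult_le_pos; [apply pow2_ge_0|apply pos_INR]. }
    replace (/ (K2 * K1) * 1 * Rpower delta eps * (delta / rho)^2 * INR (length L))
      with (Rpower delta eps * (/ (K2 * K1) * ((delta / rho)^2 * INR (length L)))) by ring.
    nra.
Qed.
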